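(* Let $K$ be a field with a non-Archimedean valuation $\mathrm{val}:K\to\mathbb{T}$, let $n\ge1$, let $Q=(V,A,s,t)$ be a finite quiver and $R$ a $Q$-representation with $R_i=K^n$ for all $i\in V$, where each arrow $\alpha$ is represented by a weakly monomial matrix $A^{\alpha}\in K^{n\times n}$. Let $\mathbf{d}=(d_i)_{i\in V}$ with $0\le d_i\le n$ and let $\boldsymbol{\mu}=(\mu_i)_{i\in V}$ be valuated matroids on $[n]$ with $\mu_i$ of rank $d_i$. Then the following are equivalent: (a) $\boldsymbol{\mu}\in\operatorname{QDr}(R,\mathbf{d};n)$; (b) $\mathrm{val}(A^{\alpha})\odot\overline{\operatorname{trop}}(\mu_{s(\alpha)})\subseteq\overline{\operatorname{trop}}(\mu_{t(\alpha)})$ for all $\alpha\in A$; (c) for every arrow $\alpha$, the map $f_\alpha$ associated to $A^\alpha$ is a (contravariant) affine morphism of valuated matroids from $\mu_{t(\alpha)}$ to $\mu_{s(\alpha)}$, i.e. $f_\alpha^{-1}(\mu_{s(\alpha)})\twoheadleftarrow(\mu_{t(\alpha)})_o$.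
   Context: Tropical conventions: $\mathbb{T}=\mathbb{R}\cup\{\infty\}$, $a\oplus b=\min$, $a\odot b=a+b$, $\mathbb{P}(\mathbb{T}^N)=(\mathbb{T}^N\setminus\{(\infty,\dots,\infty)\})/\mathbb{R}\mathbf{1}$; $\mathrm{val}(0)=\infty$; for a matrix $M$, $(\mathrm{val}(M)\odot v)_i=\min_j(\mathrm{val}(M_{ij})+v_j)$, applied pointwise to sets. Valuated matroid of rank $r$ on a finite set $E$: $\nu:\binom{E}{r}\to\mathbb{T}$, not identically $\infty$, such that for all $I,J\in\binom{E}{r}$, $i\in I\setminus J$ there is $j\in J\setminus I$ with $\nu(I)+\nu(J)\ge\nu((I\setminus i)\cup j)+\nu((J\setminus j)\cup i)$; considered up to additive constants. Convention: $\nu(S)=\infty$ if $|S|\ne r$. Tropical linear space $\overline{\operatorname{trop}}(\nu)\subseteq\mathbb{P}(\mathbb{T}^E)$: the set of $x$ such that for each $I\in\binom{E}{r+1}$ with $C_\nu(I)\ne(\infty,\dots)$ (where $C_\nu(I)_e=\nu(I\setminus e)$ for $e\in I$, $\infty$ else), $\min_e(C_\nu(I)_e+x_e)$ is attained at least twice ($\infty$ counts as twice). Quotient: for $\mu,\nu$ on $E$ of ranks $r\le s$, $\mu\twoheadleftarrow\nu$ if for all $I\in\binom{E}{r}$, $J\in\binom{E}{s}$, $i\in I\setminus J$ there is $j\in J\setminus I$ with $\mu(I)+\nu(J)\ge\mu(I\cup j\setminus i)+\nu(J\cup i\setminus j)$. Pointed matroid: for $\nu$ on $[n]$, $\nu_o$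 on $[n]\cup\{o\}$ agrees with $\nu$ on sets avoiding $o$ and is $\infty$ on sets containing $o$ (so $o$ is a loop). For $f=(f_1,f_2):[n]\cup\{o\}\to([n]\cup\{o\})\times\mathbb{T}$ with $S=f_1([n]\cup\{o\})$, let $\nu_o|_S$ be the restriction of the valuated matroid $\nu_o$ to $S$, of rank $r'$. The affine induced valuated matroid is $f^{-1}(\nu)(B)=\nu_o|_S(f_1(B))+\sum_{i\in B}f_2(i)$ for $B\subseteq[n]\cup\{o\}$, $|B|=r'$ (value $\infty$ if $|f_1(B)|<r'$). $f$ is an affine morphism of valuated matroids from $\mu$ to $\nu$ if $f^{-1}(\nu)\twoheadleftarrow\mu_o$. A matrix is weakly monomial if each row has at most one nonzero entry. The map associated to a weakly monomial $M\in K^{n\times n}$ is $f(o)=(o,\infty)$, $f(i)=(o,\infty)$ if row $i$ is zero, and $f(i)=(j,\mathrm{val}(M_{ij}))$ if $M_{ij}\ne0$. Quiver Dressian $\operatorname{QDr}(R,\mathbf{d};n)$: tuples $(p^{(i)})_{i\in V}$, $p^{(i)}\in\mathbb{P}(\mathbb{T}^{\binom{n}{d_i}})$, such that for each vertex $i$ ($r=d_i$) and $I\in\binom{[n]}{r-1}$, $J\in\binom{[n]}{r+1}$, $\min_{j\in J\setminus I}(p^{(i)}_{I\cup j}+p^{(i)}_{J\setminus j})$ is attained at least twice, and for each arrow $\alpha$ ($r=d_{s(\alpha)}$, $s=d_{t(\alpha)}$) and $I\in\binom{[n]}{r-1}$, $J\in\binom{[n]}{s+1}$, $\min_{j\in[n]\setminus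 I,i\in J}(\mathrm{val}(A^\alpha_{i,j})+p^{(s(\alpha))}_{I\cup j}+p^{(t(\alpha))}_{J\setminus i})$ is attained at least twice ($\infty$ counts as twice). *)

From HB Require Import structures.
From mathcomp Require Import all_boot all_order all_algebra.
From mathcomp Require Import reals.
Set Implicit Arguments. Unset Strict Implicit. Unset Printing Implicit Defensive.
Import Order.TTheory GRing.Theory Num.Theory.
Local Open Scope ring_scope.

(* ---------- Tropical semiring T = R ∪ {∞} (None = ∞) ---------- *)
Definition trop (R : realType) := option R.

Section Tropical.
Variable R : realType.

Definition tadd (a b : trop R) : trop R :=
  match a, b with Some x, Some y => Some (x + y) | _, _ => None end.

Definition tle (a b : trop R) : bool :=
  match a, b with
  | _, None => true
  | None, Some _ => false
  | Some x, Some y => x <= y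
  end.

Definition tmin (a b : trop R) : trop R := if tle a b then a else b.

Definition min_twice (I : finType) (P : pred I) (F : I -> trop R) : Prop :=
  (forall k, P k -> F k = None) \/
  exists i j, [/\ i != j, P i, P j, F i = F j & forall k, P k -> tle (F i) (F k)].

Definition is_valuation (K : fieldType) (val : K -> trop R) : Prop :=
  [/\ forall x, val x = None <-> x = 0,
      forall x y, val (x * y) = tadd (val x) (val y) &
      forall x y, tle (tmin (val x) (val y)) (val (x + y))].

Definition valuated_matroid (E : finType) (r : nat) (nu : {set E} -> trop R) : Prop :=
  [/\ exists B : {set E}, #|B| = r /\ nu B <> None,
      forall B : {set E}, #|B| <> r -> nu B = None &
      forall I J : {set E}, #|I| = r -> #|J| = r -> forall i, i \in I :\: J ->
        exists2 j, j \in J :\: I &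
          tle (tadd (nu (I :\ i :|: [set j])) (nu (J :\ j :|: [set i])))
              (tadd (nu I) (nu J))].

Definition vm_quotient (E : finType) (r s : nat) (mu nu : {set E} -> trop R) : Prop :=
  (r <= s)%N /\
  forall I J : {set E}, #|I| = r -> #|J| = s -> forall i, i \in I :\: J ->
    exists2 j, j \in J :\: I &
      tle (tadd (mu (I :\ i :|: [set j])) (nu (J :\ j :|: [set i])))
          (tadd (mu I) (nu J)).

Definition circ (E : finType) (nu : {set E} -> trop R) (I : {set E}) (e : E) : trop R :=
  if e \in I then nu (I :\ e) else None.

Definition in_trop (E : finType) (r : nat) (nu : {set E} -> trop R) (x : E -> trop R) : Prop :=
  forall I : {set E}, #|I| = r.+1 -> (exists e, circ nu I e <> None) ->
    min_twice predT (fun e => tadd (circ nu I e) (x e)).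

Definition tmatvec (K : fieldType) (val : K -> trop R) (n : nat) (M : 'M[K]_n)
  (v : 'I_n -> trop R) : 'I_n -> trop R :=
  fun i => \big[tmin/None]_(j < n) tadd (val (M i j)) (v j).

(* [n] ∪ {o} is  option 'I_n,  with o = None *)
Definition pointed (n : nat) (nu : {set 'I_n} -> trop R) : {set option 'I_n} -> trop R :=
  fun B => if None \in B then None else nu [set x | Some x \in B].

Definition rk_in (E : finType) (r : nat) (nu : {set E} -> trop R) (S : {set E}) : nat :=
  \max_(B : {set E} | (#|B| == r) && (nu B != None)) #|B :&: S|.

Definition restr (E : finType) (r : nat) (nu : {set E} -> trop R) (S : {set E})
  : {set E} -> trop R :=
  fun B => if (B \subset S) && (#|B| == rk_in r nu S) then
             \big[tmin/None]_(B' : {set E} | (#|B'| == r) && (B' :&: S == B)) nu B'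
           else None.

Definition img1 (n : nat) (f : option 'I_n -> option 'I_n * trop R) : {set option 'I_n} :=
  [set (f x).1 | x in [set: option 'I_n]].

Definition induced_rank (n r : nat) (nu : {set 'I_n} -> trop R)
  (f : option 'I_n -> option 'I_n * trop R) : nat :=
  rk_in r (pointed nu) (img1 f).

Definition induced (n r : nat) (nu : {set 'I_n} -> trop R)
  (f : option 'I_n -> option 'I_n * trop R) : {set option 'I_n} -> trop R :=
  fun B =>
    let r' := induced_rank r nu f in
    if (#|B| == r') && (#|[set (f x).1 | x in B]| == r') then
      tadd (restr r (pointed nu) (img1 f) [set (f x).1 | x in B])
           (\big[tadd/Some 0]_(i in B) (f i).2)
    else None.

Definition affine_morphism (n : nat) (rmu rnu : nat) (mu nu : {set 'I_n} -> trop R)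
  (f : option 'I_n -> option 'I_n * trop R) : Prop :=
  vm_quotient (induced_rank rnu nu f) rmu (induced rnu nu f) (pointed mu).

Definition weakly_monomial (K : fieldType) (n : nat) (M : 'M[K]_n) : Prop :=
  forall i j k, M i j != 0 -> M i k != 0 -> j = k.

Definition wm_map (K : fieldType) (val : K -> trop R) (n : nat) (M : 'M[K]_n)
  : option 'I_n -> option 'I_n * trop R :=
  fun x => match x with
           | None => (None, None)
           | Some i => match [pick j | M i j != 0] with
                       | Some j => (Some j, val (M i j))
                       | None => (None, None)
                       end
           end.

Definition QDr (K : fieldType) (val : K -> trop R) (n : nat) (V Ar : finType)
  (s t : Ar -> V) (A : Ar -> 'M[K]_n) (d : V -> nat)
  (p : V -> {set 'I_n} -> trop R) : Prop :=
  [/\ forall v, exists B : {set 'I_n}, #|B| = d v /\ p v B <> None,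
      forall v (I J : {set 'I_n}), #|I|.+1 = d v -> #|J| = (d v).+1 ->
        min_twice (fun j => j \in J :\: I)
                  (fun j => tadd (p v (j |: I)) (p v (J :\ j))) &
      forall a (I J : {set 'I_n}), #|I|.+1 = d (s a) -> #|J| = (d (t a)).+1 ->
        min_twice (fun ji : 'I_n * 'I_n => (ji.1 \notin I) && (ji.2 \in J))
                  (fun ji => tadd (val (A a ji.2 ji.1))
                                  (tadd (p (s a) (ji.1 |: I)) (p (t a) (J :\ ji.2))))].

End Tropical.

(* Every valuated matroid satisfies the vertex relations of the quiver Dressian, so
   (a) is the conjunction of the arrow relations.  At an arrow whose matrix A is
   weakly monomial, each row of A hits at most one column, and the arrow relations
   are equivalent to the incidence Plücker relations between the induced matroid
   f^{-1}(mu_s) and the pointed matroid (mu_t)_o.  These give the quotient as soon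
   as the rank of f^{-1}(mu_s) is at most that of mu_t, and a rank excess would
   produce a minimal dependent set of mu_t among the rows violating an arrow
   relation; this is (a)<->(c).  For (b), the cocircuit vectors mu_s(_ ∪ I) lie in
   trop(mu_s), and testing val(A) ⊙ x on them recovers the arrow relations.
   Conversely, for x in trop(mu_s) a basis of mu_s through a given column that
   minimises mu_s(B) - sum_b x_b yields an exchange inequality, which turns a unique
   minimum in a circuit relation for val(A) ⊙ x into a unique minimum in an
   incidence relation. *)

From HB Require Import structures.
From mathcomp Require Import all_boot all_order all_algebra.
From mathcomp Require Import reals.
From mathcomp Require Import lra zify.
Set Implicit Arguments. Unset Strict Implicit. Unset Printing Implicit Defensive.
Import Order.TTheory GRing.Theory Num.Theory.
Local Open Scope ring_scope.

Section TropicalArithmetic.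
Variable R : realType.
Implicit Types a b c : trop R.

Lemma tle_refl a : tle a a.
Proof. by case: a => //= x; exact: lexx. Qed.

Lemma tle_total a b : tle a b || tle b a.
Proof. by case: a; case: b => //= x y; exact: le_total. Qed.

Lemma tle_trans b a c : tle a b -> tle b c -> tle a c.
Proof. by case: a; case: b; case: c => //= x y z; apply: le_trans. Qed.

Lemma tle_anti a b : tle a b -> tle b a -> a = b.
Proof. by case: a; case: b => //= x y h1 h2; congr Some; apply/eqP; rewrite eq_le h1 h2. Qed.

Lemma tle_None a : tle a None.
Proof. by case: a. Qed.

Lemma None_tle a : tle None a = (a == None).
Proof. by case: a. Qed.

Lemma tle_neqNone a b : tle a b -> b != None -> a != None.
Proof. by case: a; case: b. Qed.

Lemma tadd_None a : tadd a None = None.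
Proof. by case: a. Qed.

Lemma tadd_neqNone a b : (tadd a b != None) = (a != None) && (b != None).
Proof. by case: a; case: b. Qed.

Lemma tle_add2r a b c : tle a b -> tle (tadd a c) (tadd b c).
Proof. by case: a; case: b; case: c => //= x y z; rewrite lerD2r. Qed.

Lemma tmin_le_l a b : tle (tmin a b) a.
Proof.
rewrite /tmin; case: ifP => [_|/negbT ab]; first exact: tle_refl.
by have := tle_total a b; rewrite (negbTE ab).
Qed.

Lemma tminA : associative (@tmin R).
Proof.
move=> a b c; rewrite /tmin.
case ab: (tle a b); case bc: (tle b c); case ac: (tle a c); rewrite ?ab ?bc ?ac //.
- by rewrite (tle_trans ab bc) in ac.
- have /orP[|ba] := tle_total a b; first by rewrite ab.
  have /orP[|cb] := tle_total b c; first by rewrite bc.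
  by rewrite (tle_anti (tle_trans cb ba) ac).
Qed.

Lemma tminC : commutative (@tmin R).
Proof.
move=> a b; rewrite /tmin.
case ab: (tle a b); case ba: (tle b a) => //; first exact: tle_anti.
by have := tle_total a b; rewrite ab ba.
Qed.

Lemma tmin0 : left_id None (@tmin R).
Proof. by case. Qed.

Lemma taddA : associative (@tadd R).
Proof. by case=> [x|]; case=> [y|]; case=> [z|] //=; rewrite addrA. Qed.

Lemma taddC : commutative (@tadd R).
Proof. by case=> [x|]; case=> [y|] //=; rewrite addrC. Qed.

Lemma tadd0 : left_id (Some 0) (@tadd R).
Proof. by case=> [x|] //=; rewrite add0r. Qed.

End TropicalArithmetic.

HB.instance Definition _ (R : realType) :=
  Monoid.isComLaw.Build (trop R) None (@tmin R) (@tminA R) (@tminC R) (@tmin0 R).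
HB.instance Definition _ (R : realType) :=
  Monoid.isComLaw.Build (trop R) (Some 0) (@tadd R) (@taddA R) (@taddC R) (@tadd0 R).

Section TropicalRearrangements.
Variable R : realType.
Implicit Types a b c d : trop R.

Lemma tadd_rotate a b c d : tadd (tadd a (tadd b c)) d = tadd (tadd b (tadd a d)) c.
Proof. by rewrite !taddA Monoid.mulmAC [tadd a b]taddC. Qed.

Lemma tle_cancel_exchange (r r0 w w0 s l l0 y y0 : trop R) :
  r0 != None -> w0 != None -> s != None -> l0 != None -> y0 != None ->
  tle (tadd (tadd r (tadd w s)) l) (tadd (tadd r0 (tadd w0 s)) l0) ->
  tle (tadd r0 y) (tadd r y0) ->
  tle (tadd w (tadd y l)) (tadd w0 (tadd y0 l0)).
Proof.
case: r0 => // r0; case: w0 => // w0; case: s => // s; case: l0 => // l0; case: y0 => // y0.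
case: r => // r; case: w => // w; case: l => // l; case: y => //= y *; lra.
Qed.

End TropicalRearrangements.

Section TropicalMinima.
Variables (R : realType) (I : finType).
Implicit Types (P Q : pred I) (F G : I -> trop R).

Lemma big_tmin_le P F k : P k -> tle (\big[@tmin R/None]_(i | P i) F i) (F k).
Proof. by move=> Pk; rewrite (bigD1 k) //=; apply: tmin_le_l. Qed.

Lemma big_tmin_attained P F :
  \big[@tmin R/None]_(i | P i) F i = None \/
  exists2 k, P k & \big[@tmin R/None]_(i | P i) F i = F k.
Proof.
apply: (big_ind (fun x => x = None \/ exists2 k, P k & x = F k)); first by left.
- by move=> x y hx hy; rewrite /tmin; case: ifP.
- by move=> i Pi; right; exists i.
Qed.

Lemma big_tadd_neqNone P F :
  (forall k, P k -> F k != None) -> \big[@tadd R/Some 0]_(i | P i) F i != None.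
Proof.
by move=> hF; apply: (big_ind (fun x => x != None)) => // x y; rewrite tadd_neqNone => -> ->.
Qed.

Lemma exists_argmin P F k0 : P k0 -> exists2 m, P m & forall k, P k -> tle (F m) (F k).
Proof.
move=> Pk0; case: (big_tmin_attained P F) => [hN|[m Pm hm]].
- exists k0 => // k Pk; have := big_tmin_le F Pk; have := big_tmin_le F Pk0.
  by rewrite hN !None_tle => /eqP-> /eqP->.
- by exists m => // k Pk; rewrite -hm; apply: big_tmin_le.
Qed.

Definition unique_argmin P F k :=
  [/\ P k, F k != None & forall k', P k' -> k' != k -> ~~ tle (F k') (F k)].

Lemma min_twiceP P F : min_twice P F <-> forall k, ~ unique_argmin P F k.
Proof.
split.
- case=> [hN k [Pk Fk _]|[i [j [ij Pi Pj Fij hmin]]] k [Pk Fk hk]].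
    by rewrite hN in Fk.
  case: (eqVneq i k) => [eik|ik]; last by have := hk i Pi ik; rewrite hmin.
  by subst k; have := hk j Pj; rewrite eq_sym ij -Fij tle_refl => /(_ isT).
- move=> h; case: (boolP [exists k, P k && (F k != None)]); last first.
    move=> hno; left => k Pk; apply/eqP; apply: contraNT hno => hF.
    by apply/existsP; exists k; rewrite Pk.
  case/existsP=> k0 /andP[Pk0 Fk0]; right.
  have [m Pm hm] := exists_argmin F Pk0.
  have Fm : F m != None := tle_neqNone (hm _ Pk0) Fk0.
  case: (boolP [exists k, [&& P k, k != m & tle (F k) (F m)]]).
  + case/existsP=> k /and3P[Pk km hle]; exists m, k; split; rewrite 1?eq_sym //.
    by apply: tle_anti; rewrite ?hm.
  + move=> hno; case: (h m); split=> // k Pk km.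
    by apply: contra hno => hle; apply/existsP; exists k; rewrite Pk km.
Qed.

Lemma min_twice_other P F k : min_twice P F -> P k -> F k != None ->
  exists k', [/\ P k', k' != k & tle (F k') (F k)].
Proof.
move=> /min_twiceP h Pk Fk.
case: (boolP [exists k', [&& P k', k' != k & tle (F k') (F k)]]).
- by case/existsP=> k' /and3P[]; exists k'.
- move=> hno; case: (h k); split=> // k' Pk' k'k.
  by apply: contra hno => hle; apply/existsP; exists k'; rewrite Pk' k'k.
Qed.

Lemma min_twice_widen P Q F G :
  {subset P <= Q} -> (forall k, P k -> G k = F k) ->
  (forall k, Q k -> ~~ P k -> G k = None) -> min_twice P F -> min_twice Q G.
Proof.
move=> PQ eGF GN /min_twiceP hP; apply/min_twiceP => k [Qk Gk hk].
have Pk : P k by apply: contraNT Gk => /(GN _ Qk) ->.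
apply: (hP k); split=> [//||k' Pk' k'k]; first by rewrite -eGF.
by rewrite -!eGF //; apply: hk => //; apply: PQ.
Qed.

End TropicalMinima.

Section SetIdentities.
Variable T : finType.
Implicit Types (a b : T) (A C : {set T}).

Lemma setU1D1C a b A : a != b -> (a |: A) :\ b = a |: (A :\ b).
Proof. by move=> ab; apply/setP => z; rewrite !inE; case: (eqVneq z a) => // ->; rewrite ab. Qed.

Lemma setU1D a A C : a \notin C -> (a |: A) :\: C = a |: (A :\: C).
Proof. by move=> aC; apply/setP => y; rewrite !inE; case: (eqVneq y a) => [->|]; rewrite ?aC. Qed.

End SetIdentities.

Section IncidenceRelations.
Variables (R : realType) (E : finType).
Implicit Types (mu nu : {set E} -> trop R).

Definition incidence_plucker r s mu nu :=
  forall I J : {set E}, #|I|.+1 = r -> #|J| = s.+1 ->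
    min_twice (fun e => e \in J :\: I) (fun e => tadd (mu (e |: I)) (nu (J :\ e))).

Lemma quotient_incidence r s mu nu :
  vm_quotient r s mu nu -> incidence_plucker r s mu nu.
Proof.
move=> [_ Hq] I J hI hJ; apply/min_twiceP => e0 [/setDP[e0J e0I] _ hs].
have c1 : #|e0 |: I| = r by rewrite cardsU1 e0I.
have c2 : #|J :\ e0| = s by move: hJ; rewrite (cardsD1 e0) e0J => -[].
have e0I' : e0 \in (e0 |: I) :\: (J :\ e0) by rewrite !inE eqxx.
have [j] := Hq _ _ c1 c2 e0 e0I'.
rewrite !inE negb_or => /andP[/andP[je0 jJ] /andP[_ jI]].
rewrite setU1K // setUC [_ :|: [set e0]]setUC -setU1D1C 1?eq_sym // setD1K // => hle.
by have := hs j; rewrite !inE jI jJ hle => /(_ isT je0).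
Qed.

Lemma incidence_quotient r s mu nu :
  (r <= s)%N -> incidence_plucker r s mu nu -> vm_quotient r s mu nu.
Proof.
move=> le_rs HP; split=> // I J cI cJ i /setDP[iI iJ].
have cIi : #|I :\ i|.+1 = r by move: cI; rewrite (cardsD1 i) iI.
case: (eqVneq (tadd (mu I) (nu J)) None) => [hN|hF].
  case: (set_0Vmem (J :\: I)) => [JI0|[j hj]]; last by exists j; rewrite // hN tle_None.
  have /subset_leq_card : J \subset I :\ i by rewrite subsetD1 iJ andbT -setD_eq0 JI0.
  by rewrite cJ; move: cIi le_rs; lia.
have cJi : #|i |: J| = s.+1 by rewrite cardsU1 iJ cJ.
have eFi : tadd (mu (i |: (I :\ i))) (nu ((i |: J) :\ i)) = tadd (mu I) (nu J).
  by rewrite setD1K // setU1K.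
have iJI : i \in (i |: J) :\: (I :\ i) by rewrite !inE eqxx.
have hFi : tadd (mu (i |: (I :\ i))) (nu ((i |: J) :\ i)) != None by rewrite eFi.
have [k [+ ki]] := min_twice_other (HP _ _ cIi cJi) iJI hFi.
rewrite !inE (negbTE ki) /= => /andP[kI kJ] hle.
exists k; first by rewrite inE kI.
by rewrite setUC [J :\ k :|: _]setUC -(setU1D1C J (_ : i != k)) 1?eq_sym // -eFi.
Qed.

End IncidenceRelations.

Section ValuatedMatroid.
Variables (R : realType) (E : finType) (r : nat) (nu : {set E} -> trop R).
Hypothesis Hnu : valuated_matroid r nu.
Implicit Types B I Z P : {set E}.

Lemma vm_None B : #|B| != r -> nu B = None.
Proof. by case: Hnu => _ HN _ /eqP; apply: HN. Qed.

Lemma vm_card B : nu B != None -> #|B| = r.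
Proof. by move=> hB; apply/eqP; apply: contraNT hB => /vm_None ->. Qed.

Lemma vm_quotient_refl : vm_quotient r r nu nu.
Proof. by case: Hnu. Qed.

Lemma vm_incidence : incidence_plucker r r nu nu.
Proof. exact: quotient_incidence vm_quotient_refl. Qed.

Lemma vm_cocircuit I : #|I|.+1 = r -> in_trop r nu (fun j => nu (j |: I)).
Proof.
move=> hI C hC _; apply: min_twice_widen (vm_incidence hI hC) => // e.
  by case/setDP=> eC _; rewrite /circ eC taddC.
move=> _; rewrite inE negb_and negbK /circ => /orP[eI|/negbTE-> //].
rewrite (setUidPr _) ?sub1set // (@vm_None I) ?tadd_None //.
by rewrite -hI neq_ltn ltnSn.
Qed.

Definition vm_indep (Z : {set E}) := [exists N, (nu N != None) && (Z \subset N)].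

Lemma vm_indep_card Z : vm_indep Z -> (#|Z| <= r)%N.
Proof. by case/existsP=> N /andP[/vm_card <- /subset_leq_card]. Qed.

Lemma vm_indep0 : vm_indep set0.
Proof.
by case: Hnu => -[N [_ hN]] _ _; apply/existsP; exists N; rewrite sub0set andbT; apply/eqP.
Qed.

Lemma vm_minimal_dependent P : ~~ vm_indep P ->
  exists Z z, [/\ Z \subset P, z \in Z, ~~ vm_indep Z & vm_indep (Z :\ z)].
Proof.
move=> dP; have hP : (P \subset P) && ~~ vm_indep P by rewrite subxx.
case: (@arg_minnP _ P (fun Z => (Z \subset P) && ~~ vm_indep Z) (fun Z => #|Z|) hP).
move=> Z /andP[ZP dZ] Zmin; have [Z0|[z zZ]] := set_0Vmem Z.
  by rewrite Z0 vm_indep0 in dZ.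
exists Z, z; split=> //; apply: contraT => dZz.
have := Zmin (Z :\ z); rewrite dZz (subset_trans (subD1set _ _) ZP) (cardsD1 z Z) zZ.
by move=> /(_ isT); rewrite ltnn.
Qed.

End ValuatedMatroid.

Section SomeSet.
Variable n : nat.
Implicit Types (X : {set 'I_n}) (Y : {set option 'I_n}).

Definition some_set X : {set option 'I_n} := Some @: X.
Definition unsome_set Y : {set 'I_n} := [set x | Some x \in Y].

Lemma mem_some_set X x : (Some x \in some_set X) = (x \in X).
Proof. by rewrite mem_imset //; move=> a b []. Qed.

Lemma None_some_set X : (None \in some_set X) = false.
Proof. by apply/negbTE/imsetP => -[]. Qed.

Lemma card_some_set X : #|some_set X| = #|X|.
Proof. by rewrite card_imset //; move=> a b []. Qed.

Lemma some_setK : cancel some_set unsome_set.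
Proof. by move=> X; apply/setP => x; rewrite inE mem_some_set. Qed.

Lemma some_set_inj : injective some_set.
Proof. exact: can_inj some_setK. Qed.

Lemma unsome_setK Y : None \notin Y -> some_set (unsome_set Y) = Y.
Proof.
move=> hN; apply/setP => -[x|]; first by rewrite mem_some_set inE.
by rewrite None_some_set (negbTE hN).
Qed.

Lemma some_setU1 x X : some_set (x |: X) = Some x |: some_set X.
Proof. exact: imsetU1. Qed.

Lemma some_setD1 x X : some_set (X :\ x) = some_set X :\ Some x.
Proof. by apply/setP => -[y|]; rewrite ?inE !(mem_some_set, None_some_set) ?inE. Qed.

Lemma some_setI X Y : some_set (X :&: unsome_set Y) = some_set X :&: Y.
Proof. by apply/setP => -[y|]; rewrite ?inE !(mem_some_set, None_some_set) ?inE. Qed.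

Lemma pointed_some_set (R : realType) (nu : {set 'I_n} -> trop R) X :
  pointed nu (some_set X) = nu X.
Proof. by rewrite /pointed None_some_set -[in RHS](some_setK X). Qed.

Lemma pointed_neqNone (R : realType) (nu : {set 'I_n} -> trop R) Y :
  pointed nu Y != None -> Y = some_set (unsome_set Y).
Proof. by rewrite /pointed; case: ifPn => // hN _; rewrite unsome_setK. Qed.

End SomeSet.

Section Restriction.
Variables (R : realType) (n rs : nat) (mu : {set 'I_n} -> trop R).
Hypothesis Hmu : valuated_matroid rs mu.
Variable S : {set option 'I_n}.
Implicit Types B : {set 'I_n}.

Local Notation S' := (unsome_set S).
Local Notation rk := (rk_in rs (pointed mu) S).
Local Notation rst := (restr rs (pointed mu) S).

Lemma rk_in_max B : mu B != None -> (#|B :&: S'| <= rk)%N.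
Proof.
move=> hB; rewrite -card_some_set some_setI.
apply: (leq_bigmax_cond (some_set B)).
by rewrite card_some_set (vm_card Hmu hB) eqxx pointed_some_set.
Qed.

Lemma rk_in_attained : exists B, [/\ #|B| = rs, mu B != None & #|B :&: S'| = rk].
Proof.
case: Hmu => -[B0 [cB0 hB0]] _ _.
have P0 : (#|some_set B0| == rs) && (pointed mu (some_set B0) != None).
  by rewrite card_some_set cB0 eqxx pointed_some_set; apply/eqP.
rewrite /rk_in (bigop.bigmax_eq_arg (some_set B0)) //.
case: arg_maxnP => // Y /andP[/eqP cY hY] _; have eY := pointed_neqNone hY.
exists (unsome_set Y); split.
- by rewrite -card_some_set -eY.
- by rewrite -(pointed_some_set mu) -eY.
- by rewrite -card_some_set some_setI -eY.
Qed.

Lemma restr_le_basis B : #|B| = rs -> #|B :&: S'| = rk ->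
  tle (rst (some_set (B :&: S'))) (mu B).
Proof.
move=> cB cBS; rewrite /restr card_some_set cBS eqxx some_setI subsetIr /=.
rewrite -(pointed_some_set mu B); apply: big_tmin_le.
by rewrite card_some_set cB !eqxx.
Qed.

Lemma restr_attained Y : rst Y != None ->
  exists B, [/\ #|B| = rs, some_set (B :&: S') = Y, #|B :&: S'| = rk & rst Y = mu B].
Proof.
rewrite /restr; case: ifP => // /andP[_ /eqP cY].
pose P (B' : {set option 'I_n}) := (#|B'| == rs) && (B' :&: S == Y).
case: (big_tmin_attained P (pointed mu)) => [->|[B' /andP[/eqP cB' /eqP eY] ->]] // hB'.
have eB' := pointed_neqNone hB'.
exists (unsome_set B'); rewrite some_setI -eB' eY; split=> //.
- by rewrite -card_some_set -eB'.
- by rewrite -card_some_set some_setI -eB' eY.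
- by rewrite {1}eB' pointed_some_set.
Qed.

Definition rk_basis B := [&& #|B| == rs, mu B != None & #|B :&: S'| == rk].

Section TropicalPoint.
Variable x : 'I_n -> trop R.
Hypothesis hx : in_trop rs mu x.

(* Coordinates where [x] is infinite are frozen into a restriction basis
   maximising their number; every other coordinate of a basis containing them is
   finite, which makes the real objective [phi] below meaningful. *)
Lemma exists_infinite_core : exists CT : {set 'I_n},
  [/\ CT \subset S', {in CT, forall z, x z = None},
      (exists2 B, rk_basis B & CT \subset B) &
      forall B z, rk_basis B -> CT \subset B -> z \in B :&: S' -> z \notin CT ->
        x z != None].
Proof.
pose Tinf := [set j | x j == None].
have [B1 [cB1 hB1 cB1S]] := rk_in_attained.
have PB1 : rk_basis B1 by rewrite /rk_basis cB1 hB1 cB1S !eqxx.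
case: (@arg_maxnP _ B1 rk_basis (fun B => #|B :&: S' :&: Tinf|) PB1) => B0 PB0 B0max.
set CT := B0 :&: S' :&: Tinf.
have CTS : CT \subset S' by rewrite /CT -setIA subIset // orbC subIset // subxx.
have CTT : CT \subset Tinf by apply: subsetIr.
exists CT; split=> //.
- by move=> z /(subsetP CTT); rewrite inE => /eqP.
- by exists B0; rewrite // /CT -setIA subsetIl.
move=> B z PB CTB zBS zCT; apply/negP => /eqP xz.
have : z |: CT \subset B :&: S' :&: Tinf.
  by rewrite subUset sub1set in_setI zBS inE xz eqxx !subsetI CTB CTS CTT.
move/subset_leq_card; rewrite cardsU1 zCT add1n => /leq_trans/(_ (B0max B PB)).
by rewrite ltnn.
Qed.

Section Core.
Variable CT : {set 'I_n}.
Hypothesis CT_inf : {in CT, forall z, x z = None}.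

Definition core_basis B := rk_basis B && (CT \subset B).

Definition phi B := odflt 0 (mu B) - \sum_(b in B :&: S' :\: CT) odflt 0 (x b).

Lemma core_basis_exchange B j0 : core_basis B -> j0 \in S' -> x j0 != None ->
  j0 \notin B -> exists2 B', core_basis B' /\ j0 \in B' & phi B' <= phi B.
Proof.
move=> /andP[/and3P[/eqP cB hB /eqP cBS] CTB] j0S xj0 j0B.
have cC : #|j0 |: B| = rs.+1 by rewrite cardsU1 j0B cB.
have circ_j0 : circ mu (j0 |: B) j0 = mu B by rewrite /circ setU11 setU1K.
have hC : exists e, circ mu (j0 |: B) e <> None.
  by exists j0; rewrite circ_j0; apply/eqP.
have T0 : tadd (circ mu (j0 |: B) j0) (x j0) != None by rewrite circ_j0 tadd_neqNone hB.
have [e [_ ej0 hle]] := min_twice_other (hx cC hC) isT T0.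
move: (tle_neqNone hle T0); rewrite tadd_neqNone => /andP[hce xe].
have eC : e \in j0 |: B by move: hce; rewrite /circ; case: ifP.
have eB : e \in B by move: eC; rewrite in_setU1 (negbTE ej0).
move: hce hle; rewrite circ_j0 /circ eC => hB' hle.
have eB'S : ((j0 |: B) :\ e) :&: S' = j0 |: ((B :&: S') :\ e).
  apply/setP => y; rewrite !inE; case: (eqVneq y j0) => [->|_] /=.
    by move: j0S; rewrite eq_sym ej0 inE.
  by rewrite andbA.
have eCT : e \notin CT by apply: contra xe => /CT_inf ->.
have j0CT : j0 \notin CT by apply: contra xj0 => /CT_inf ->.
have eS : e \in S'.
  apply: contraT => eS; have := rk_in_max hB'.
  rewrite eB'S cardsU1 !inE (negbTE j0B) andbF /= add1n.
  have := cardsD1 e (B :&: S'); rewrite in_setI (negbTE eS) andbF add0n => <-.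
  by rewrite cBS ltnn.
have eBS : e \in B :&: S' by rewrite in_setI eB.
have cB'S : #|((j0 |: B) :\ e) :&: S'| = rk.
  rewrite eB'S cardsU1 !inE (negbTE j0B) andbF /= add1n -cBS.
  by rewrite (cardsD1 e (B :&: S')) eBS.
exists ((j0 |: B) :\ e); first split.
- rewrite /core_basis /rk_basis (vm_card Hmu hB') hB' cB'S !eqxx /=.
  apply/subsetP => w wCT; rewrite !inE (subsetP CTB _ wCT) orbT andbT.
  by apply: contraNneq eCT => <-.
- by rewrite !inE eq_sym ej0 eqxx.
have eBSC : e \in B :&: S' :\: CT by rewrite in_setD eCT.
rewrite /phi eB'S (setU1D _ j0CT) setDDl [[set e] :|: _]setUC -setDDl.
rewrite big_setU1 /=; last by rewrite !inE (negbTE j0B) !andbF.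
rewrite [X in _ <= _ - X](big_setD1 e) //=.
move: hle hB' xe hB xj0; case: (mu _) => [a|] //; case: (x e) => [b|] //.
by case: (mu B) => [c|] //; case: (x j0) => [d|] //= hle; lra.
Qed.

Lemma exists_optimal_core_basis j0 : (exists2 B, rk_basis B & CT \subset B) ->
  j0 \in S' -> x j0 != None ->
  exists B, [/\ core_basis B, j0 \in B & forall B', core_basis B' -> phi B <= phi B'].
Proof.
move=> [B0 hB0 CTB0] j0S xj0; have PB0 : core_basis B0 by rewrite /core_basis hB0.
case: (@arg_minP _ _ _ B0 core_basis phi PB0) => B hB Bmin.
have [j0B|j0B] := boolP (j0 \in B); first by exists B.
have [B' [hB' j0B'] le_phi] := core_basis_exchange hB j0S xj0 j0B.
by exists B'; split=> // B'' /Bmin; apply: le_trans.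
Qed.

End Core.

(* [K] is the trace on the image of an optimal core basis through [j0], minus [j0];
   then [j0] minimises [j |-> rst (j |: K) - x j]. *)
Lemma restr_exchange j0 : j0 \in S' -> x j0 != None ->
  exists K : {set 'I_n},
    [/\ K \subset S', #|K|.+1 = rk, j0 \notin K, rst (some_set (j0 |: K)) != None &
        forall j, j \notin K ->
          tle (tadd (rst (some_set (j0 |: K))) (x j))
              (tadd (rst (some_set (j |: K))) (x j0))].
Proof.
move=> j0S xj0; have [CT [CT_S CT_inf CT_basis CT_max]] := exists_infinite_core.
have [B [/andP[/and3P[/eqP cB hB /eqP cBS] CTB] j0B Bopt]] :=
  exists_optimal_core_basis CT_inf CT_basis j0S xj0.
set K := (B :&: S') :\ j0.
have eBS : B :&: S' = j0 |: K by rewrite setD1K // in_setI j0B.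
have j0K : j0 \notin K by rewrite setD11.
have j0CT : j0 \notin CT by apply: contra xj0 => /CT_inf ->.
have CTK : CT \subset K.
  apply/subsetP => w wCT.
  rewrite in_setD1 in_setI (subsetP CTB _ wCT) (subsetP CT_S _ wCT) !andbT.
  by apply: contraNneq j0CT => <-.
have r0_le : tle (rst (some_set (j0 |: K))) (mu B) by rewrite -eBS; apply: restr_le_basis.
exists K; split=> //.
- by apply: subset_trans (subD1set _ _) (subsetIr _ _).
- by rewrite -cBS eBS cardsU1 j0K.
- exact: tle_neqNone r0_le hB.
move=> j jK; case: (eqVneq j j0) => [->|jj0]; first exact: tle_refl.
case: (eqVneq (rst (some_set (j |: K))) None) => [->|]; first by rewrite tle_None.
move=> hr; have [Bm [cBm /some_set_inj eBmS cBmS eBm]] := restr_attained hr.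
rewrite eBm in hr *.
have jCT : j \notin CT by apply: contra jK; apply: (subsetP CTK).
have PBm : rk_basis Bm by rewrite /rk_basis cBm hr cBmS !eqxx.
have CTBm : CT \subset Bm.
  apply: (subset_trans CTK); apply: (subset_trans (subsetUr [set j] K)).
  by rewrite -eBmS subsetIl.
have jBmS : j \in Bm :&: S' by rewrite eBmS setU11.
have xj : x j != None := CT_max Bm j PBm CTBm jBmS jCT.
have := Bopt Bm; rewrite /core_basis PBm CTBm => /(_ isT).
have j0KC : j0 \notin K :\: CT by rewrite in_setD (negbTE j0K) andbF.
have jKC : j \notin K :\: CT by rewrite in_setD (negbTE jK) andbF.
rewrite /phi eBS eBmS (setU1D _ j0CT) (setU1D _ jCT) !big_setU1 //=.
move: r0_le hB hr xj xj0; case: (mu B) => [b|] //; case: (mu Bm) => [c|] //.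
case: (rst (some_set (j0 |: K))) => [a|] //.
by case: (x j) => [d|] //; case: (x j0) => [e|] //= *; lra.
Qed.

End TropicalPoint.
End Restriction.

Section MonomialArrow.
Variables (R : realType) (F : fieldType) (val : F -> trop R).
Hypothesis Hval : is_valuation val.
Variables (n : nat) (M : 'M[F]_n).
Hypothesis HM : weakly_monomial M.
Variables (rs rt : nat) (mu nu : {set 'I_n} -> trop R).
Hypothesis Hmu : valuated_matroid rs mu.
Hypothesis Hnu : valuated_matroid rt nu.

Local Notation f := (wm_map val M).
Local Notation S' := (unsome_set (img1 f)).
Local Notation rk := (rk_in rs (pointed mu) (img1 f)).
Local Notation rst := (restr rs (pointed mu) (img1 f)).
Local Notation nu' := (induced rs mu f).

Implicit Types (B : {set option 'I_n}) (Z : {set 'I_n}) (e : option 'I_n).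

Definition col i := (f (Some i)).1.
Definition wt i := (f (Some i)).2.

Lemma val_eqNone a : (val a == None) = (a == 0).
Proof. by case: Hval => h _ _; apply/eqP/eqP => /h. Qed.

Lemma col_eq i j : (col i == Some j) = (val (M i j) != None).
Proof.
rewrite /col /=; case: pickP => [j' Mij'|M0] /=; last by rewrite val_eqNone M0.
rewrite val_eqNone; apply/eqP/idP => [[<-] //|Mij].
by rewrite (HM Mij' Mij).
Qed.

Lemma wt_col i j : col i = Some j -> wt i = val (M i j).
Proof. by rewrite /col /wt /=; case: pickP => [j' _ [<-]|]. Qed.

Lemma val_M i j : val (M i j) = if col i == Some j then wt i else None.
Proof.
case: ifPn => [/eqP/wt_col -> //|]; rewrite col_eq negbK.
by move/eqP.
Qed.

Lemma wt_neqNone i j : col i = Some j -> wt i != None.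
Proof. by move=> h; rewrite (wt_col h) -col_eq h. Qed.

Lemma tmatvec_col x i :
  tmatvec val M x i = if col i is Some j then tadd (wt i) (x j) else None.
Proof.
rewrite /tmatvec; case h: (col i) => [j|]; last by rewrite big1 // => k _; rewrite val_M h.
rewrite (bigD1 j) //= big1 => [|k kj]; last first.
  by rewrite val_M h; case: eqP => // -[ekj]; rewrite ekj eqxx in kj.
by rewrite (wt_col h) /tmin tle_None.
Qed.

Lemma col_in_S' i j : col i = Some j -> j \in S'.
Proof. by move=> h; rewrite inE; apply/imsetP; exists (Some i); rewrite ?inE -?h. Qed.

Definition row_of j := odflt j [pick i | col i == Some j].

Lemma col_row_of j : j \in S' -> col (row_of j) = Some j.
Proof.
rewrite inE => /imsetP[[i|] _ //= eji].
rewrite /row_of; case: pickP => [i' /eqP //|/(_ i)].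
by rewrite /col -eji eqxx.
Qed.

Lemma row_of_inj : {in S' &, injective row_of}.
Proof. by move=> j j' hj hj' e; have := col_row_of hj; rewrite e col_row_of // => -[]. Qed.

Definition im (B : {set option 'I_n}) := [set (f e).1 | e in B].
Definition wsum (B : {set option 'I_n}) := \big[@tadd R/Some 0]_(e in B) (f e).2.

Lemma im_U1 e B : im (e |: B) = (f e).1 |: im B.
Proof. exact: imsetU1. Qed.

Lemma wsum_U1 e B : e \notin B -> wsum (e |: B) = tadd (f e).2 (wsum B).
Proof. exact: big_setU1. Qed.

Lemma wsum_mem B e : wsum B != None -> e \in B -> (f e).2 != None.
Proof. by move=> + eB; apply: contra => /eqP he; rewrite /wsum (bigD1 e) //= he. Qed.

Lemma f2_neqNone e : (f e).2 != None -> exists i j, e = Some i /\ col i = Some j.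
Proof.
rewrite /wm_map /col; case: e => [i|] //=.
by move=> h; exists i; move: h; case: pickP => [j _ _|_] //=; exists j.
Qed.

Lemma induced_eq B : #|B| = rk -> #|im B| = rk -> nu' B = tadd (rst (im B)) (wsum B).
Proof. by move=> cB cim; rewrite /induced /induced_rank cB cim !eqxx. Qed.

Lemma induced_neqNone B : nu' B != None ->
  [/\ #|B| = rk, #|im B| = rk, rst (im B) != None & wsum B != None].
Proof.
rewrite /induced /induced_rank; case: ifP => // /andP[/eqP cB /eqP cim].
by rewrite tadd_neqNone => /andP[hr hw]; split.
Qed.

Section Extension.
Variables (I : {set option 'I_n}) (Z : {set 'I_n}).
Hypotheses (imI : im I = some_set Z) (cI : #|I| = #|Z|) (cZ : #|Z|.+1 = rk).

Lemma notin_of_col i j : col i = Some j -> j \notin Z -> Some i \notin I.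
Proof.
move=> ci; apply: contra => iI.
by rewrite -mem_some_set -imI; apply/imsetP; exists (Some i); rewrite // -ci.
Qed.

Lemma induced_U1 i j : col i = Some j -> j \notin Z ->
  nu' (Some i |: I) = tadd (rst (some_set (j |: Z))) (tadd (wt i) (wsum I)).
Proof.
move=> ci jZ; have iI := notin_of_col ci jZ.
have eim : im (Some i |: I) = some_set (j |: Z) by rewrite im_U1 imI some_setU1 -ci.
rewrite induced_eq ?eim ?wsum_U1 //; first by rewrite cardsU1 iI cI.
by rewrite card_some_set cardsU1 jZ.
Qed.

Lemma induced_U1_None i j : col i = Some j -> j \in Z -> nu' (Some i |: I) = None.
Proof.
move=> ci jZ; have : #|im (Some i |: I)| != rk.
  rewrite im_U1 imI -[(f _).1]/(col i) ci -some_setU1 (setUidPr _) ?sub1set //.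
  by rewrite card_some_set -cZ neq_ltn ltnSn.
by rewrite /induced /induced_rank /im => /negbTE ->; rewrite andbF.
Qed.

End Extension.

Lemma induced_U1_basis (I : {set option 'I_n}) i0 j0 :
  col i0 = Some j0 -> #|I|.+1 = rk -> nu' (Some i0 |: I) != None ->
  exists B : {set 'I_n}, [/\ #|B| = rs, j0 \in B :&: S', #|B :&: S'| = rk,
    im I = some_set ((B :&: S') :\ j0) &
    nu' (Some i0 |: I) = tadd (mu B) (tadd (wt i0) (wsum I))].
Proof.
move=> c0 hI h1; have [cI cim hrst _] := induced_neqNone h1.
have i0I : Some i0 \notin I.
  by apply/negP => i0I; move: cI; rewrite cardsU1 i0I add0n -hI; apply: n_Sn.
have [B [cB eBS cBS hB]] := restr_attained hrst.
have j0imI : Some j0 \notin im I.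
  have /imset_injP inj : #|im (Some i0 |: I)| == #|Some i0 |: I| by rewrite cim cI.
  apply/imsetP => -[e eI he]; have ei0 : Some i0 = e.
    by apply: inj; rewrite ?setU11 ?setU1r //= -he.
  by rewrite ei0 eI in i0I.
have eimU : im (Some i0 |: I) = Some j0 |: im I by rewrite im_U1 -[(f _).1]/(col i0) c0.
exists B; split=> //.
- by rewrite -mem_some_set eBS eimU setU11.
- by rewrite some_setD1 eBS eimU setU1K.
- by rewrite induced_eq // hB wsum_U1.
Qed.

Definition rows (Z : {set 'I_n}) := some_set (row_of @: Z).

Lemma rows_spec Z : Z \subset S' ->
  [/\ #|rows Z| = #|Z|, im (rows Z) = some_set Z & wsum (rows Z) != None].
Proof.
move=> ZS; split.
- rewrite card_some_set card_in_imset // => a b ha hb.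
  by apply: row_of_inj; apply: (subsetP ZS).
- rewrite /im /rows /some_set -!imset_comp; apply: eq_in_imset => k kZ /=.
  exact: col_row_of (subsetP ZS _ kZ).
- apply: big_tadd_neqNone => _ /imsetP[_ /imsetP[k kZ ->] ->].
  exact: wt_neqNone (col_row_of (subsetP ZS _ kZ)).
Qed.

Definition arrow_relations :=
  forall I J : {set 'I_n}, #|I|.+1 = rs -> #|J| = rt.+1 ->
  min_twice (fun ji : 'I_n * 'I_n => (ji.1 \notin I) && (ji.2 \in J))
            (fun ji => tadd (val (M ji.2 ji.1)) (tadd (mu (ji.1 |: I)) (nu (J :\ ji.2)))).

Definition maps_trop := forall x, in_trop rs mu x -> in_trop rt nu (tmatvec val M x).

Lemma circ_tmatvec x (J : {set 'I_n}) i j : i \in J -> col i = Some j ->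
  tadd (circ nu J i) (tmatvec val M x i) = tadd (val (M i j)) (tadd (x j) (nu (J :\ i))).
Proof. by move=> iJ ci; rewrite tmatvec_col ci /circ iJ (wt_col ci) taddC taddA. Qed.

Lemma arrow_relations_of_maps_trop : maps_trop -> arrow_relations.
Proof.
move=> HB I J hI hJ; apply/min_twiceP => -[j0 i0] [/andP[/= j0I i0J] /= F0 hs].
have c0 : col i0 = Some j0 by apply/eqP; rewrite col_eq; apply: contraNneq F0 => ->.
have hC : exists k, circ nu J k <> None.
  exists i0; rewrite /circ i0J; apply/eqP; apply: contraNneq F0 => ->.
  by rewrite !tadd_None.
have := HB _ (vm_cocircuit Hmu hI) J hJ hC; apply/min_twiceP => /(_ i0); apply.
split=> //; first by rewrite (circ_tmatvec _ i0J c0).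
move=> k _ ki0; rewrite (circ_tmatvec _ i0J c0).
case ck: (col k) => [j|]; last by rewrite tmatvec_col ck tadd_None None_tle.
have [kJ|kJ] := boolP (k \in J); last by rewrite /circ (negbTE kJ) None_tle.
rewrite (circ_tmatvec _ kJ ck).
have [jI|jI] := boolP (j \in I).
  rewrite (setUidPr _) ?sub1set // (@vm_None _ _ _ _ Hmu I) ?tadd_None ?None_tle //.
  by rewrite -hI neq_ltn ltnSn.
by have := hs (j, k); rewrite /= jI kJ xpair_eqE (negbTE ki0) andbF => /(_ isT isT).
Qed.

Lemma incidence_of_arrow_relations :
  arrow_relations -> incidence_plucker rk rt nu' (pointed nu).
Proof.
move=> HA I J hI hJ; apply/min_twiceP => e0 [/setDP[e0J e0I] F0 hs].
move: (F0); rewrite tadd_neqNone => /andP[h1 h2].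
have [_ _ _ /wsum_mem/(_ (setU11 e0 I))] := induced_neqNone h1.
case/f2_neqNone=> i0 [j0 [ee0 c0]]; subst e0.
have [J0 eJ] : exists J0, J = some_set J0.
  exists (unsome_set J); rewrite unsome_setK //; apply: contraNN h2 => NJ.
  by rewrite /pointed in_setD1 NJ.
subst J; have [B [cB j0BS cBS imI eT0]] := induced_U1_basis c0 hI h1.
set Z := (B :&: S') :\ j0; set I0 := B :\ j0.
have cZ : #|Z|.+1 = rk by rewrite -cBS (cardsD1 j0 (B :&: S')) j0BS.
have cIZ : #|I| = #|Z| by apply: succn_inj; rewrite hI cZ.
have cI0 : #|I0|.+1 = rs by rewrite -cB (cardsD1 j0 B) (setIP j0BS).1.
have cJ0 : #|J0| = rt.+1 by rewrite -card_some_set.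
have T0 : tadd (nu' (Some i0 |: I)) (pointed nu (some_set J0 :\ Some i0)) =
    tadd (tadd (val (M i0 j0)) (tadd (mu (j0 |: I0)) (nu (J0 :\ i0)))) (wsum I).
  rewrite eT0 -some_setD1 pointed_some_set setD1K ?(setIP j0BS).1 //.
  by rewrite (wt_col c0) tadd_rotate.
have T0fin : tadd (val (M i0 j0)) (tadd (mu (j0 |: I0)) (nu (J0 :\ i0))) != None.
  by move: F0; rewrite T0 tadd_neqNone => /andP[].
have := HA I0 J0 cI0 cJ0; apply/min_twiceP => /(_ (j0, i0)); apply; split=> //=.
  by rewrite setD11 -mem_some_set.
move=> [j i] /andP[/= jI0 iJ0] hne; rewrite val_M.
case: eqP => [ci|_]; last by rewrite None_tle.
have ii0 : i != i0 by apply: contraNneq hne => ei; move: ci; rewrite ei c0 => -[->].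
have jZ : j \notin Z by apply: contra jI0; rewrite !inE => /andP[-> /andP[]].
have := hs (Some i); rewrite in_setD mem_some_set iJ0 (notin_of_col imI ci jZ).
rewrite (inj_eq Some_inj) ii0 => /(_ isT isT); apply: contra => /= hle.
rewrite T0 (induced_U1 imI cIZ cZ ci jZ) -some_setD1 pointed_some_set.
have ejZ : (j |: I0) :&: S' = j |: Z.
  by rewrite setIUl setIDAC (setIidPl _) // sub1set (col_in_S' ci).
have r_le : tle (rst (some_set (j |: Z))) (mu (j |: I0)).
  rewrite -ejZ; apply: restr_le_basis => //; last by rewrite ejZ cardsU1 jZ.
  by rewrite cardsU1 jI0.
apply: tle_trans (tle_add2r (nu (J0 :\ i)) (tle_add2r (tadd (wt i) (wsum I)) r_le)) _.
by rewrite [X in tle X _]tadd_rotate; apply: tle_add2r _ hle.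
Qed.

Lemma induced_rank_le : arrow_relations -> (rk <= rt)%N.
Proof.
move=> HA; rewrite leqNgt; apply/negP => lt_rt_rk.
have [B [cB hB cBS]] := rk_in_attained Hmu (img1 f).
have dP : ~~ vm_indep nu (row_of @: (B :&: S')).
  apply: contraL lt_rt_rk => /(vm_indep_card Hnu); rewrite -leqNgt.
  rewrite card_in_imset -?cBS // => a b /setIP[_ ha] /setIP[_ hb]; exact: row_of_inj.
have [Z [z0 [ZP z0Z dZ /existsP[N /andP[hN ZN]]]]] := vm_minimal_dependent Hnu dP.
have z0N : z0 \notin N.
  apply: contra dZ => z0N; apply/existsP; exists N.
  by rewrite hN -(setD1K z0Z) subUset sub1set z0N.
have [j /setIP[jB jS] ez0] := imsetP (subsetP ZP z0 z0Z).
have c0 : col z0 = Some j by rewrite ez0 col_row_of.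
set I0 := B :\ j; set J0 := z0 |: N.
have cI0 : #|I0|.+1 = rs by rewrite -cB (cardsD1 j B) jB.
have cJ0 : #|J0| = rt.+1 by rewrite cardsU1 z0N (vm_card Hnu hN).
have T0 : tadd (val (M z0 j)) (tadd (mu (j |: I0)) (nu (J0 :\ z0))) != None.
  by rewrite setD1K // setU1K // -(wt_col c0) !tadd_neqNone (wt_neqNone c0) hB hN.
have := HA I0 J0 cI0 cJ0; apply/min_twiceP => /(_ (j, z0)); apply; split=> //=.
  by rewrite setD11 setU11.
move=> [j' i'] /andP[/= j'I0 i'J0] hne.
suff -> : tadd (val (M i' j')) (tadd (mu (j' |: I0)) (nu (J0 :\ i'))) = None.
  by rewrite None_tle.
rewrite val_M; case: eqP => [ci'|_] //.
have i'z0 : i' != z0 by apply: contraNneq hne => ei'; move: ci'; rewrite ei' c0 => -[->].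
have [i'Z|i'Z] := boolP (i' \in Z).
  have [j'' /setIP[j''B j''S] ei'] := imsetP (subsetP ZP i' i'Z).
  move: ci'; rewrite ei' col_row_of // => -[ej'']; subst j''.
  have j'j : j' != j by apply: contraNneq i'z0 => ej; rewrite ei' ez0 ej.
  by rewrite in_setD1 j'j j''B in j'I0.
suff -> : nu (J0 :\ i') = None by rewrite !tadd_None.
apply/eqP; apply: contraNT dZ => hN'; apply/existsP; exists (J0 :\ i').
rewrite hN' -(setD1K z0Z) subUset sub1set !inE eq_sym i'z0 eqxx /=.
apply/subsetP => z /setD1P[zz0 zZ]; rewrite !inE (subsetP ZN) ?inE ?zz0 ?zZ // orbT andbT.
by apply: contraNneq i'Z => <-.
Qed.

Lemma maps_trop_of_incidence :
  incidence_plucker rk rt nu' (pointed nu) -> maps_trop.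
Proof.
move=> HP x hx J hJ _; apply/min_twiceP => i0 [_ F0 hs].
have i0J : i0 \in J by move: F0; rewrite /circ; case: ifP.
case c0: (col i0) => [j0|]; last by move: F0; rewrite tmatvec_col c0 tadd_None eqxx.
move: F0; rewrite (circ_tmatvec _ i0J c0).
rewrite !tadd_neqNone => /and3P[_ xj0 nu0]; have w0 := wt_neqNone c0.
have [Z [ZS cZ j0Z r0 Zopt]] := restr_exchange Hmu hx (col_in_S' c0) xj0.
have [cI imI wsI] := rows_spec ZS.
have cI' : #|rows Z|.+1 = rk by rewrite cI.
have cJ : #|some_set J| = rt.+1 by rewrite card_some_set.
have term i j : col i = Some j -> j \notin Z ->
    tadd (nu' (Some i |: rows Z)) (pointed nu (some_set J :\ Some i)) =
    tadd (tadd (rst (some_set (j |: Z))) (tadd (wt i) (wsum (rows Z)))) (nu (J :\ i)).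
  by move=> ci jZ; rewrite (induced_U1 imI cI cZ ci jZ) -some_setD1 pointed_some_set.
have T0 := term _ _ c0 j0Z.
have T0fin : tadd (nu' (Some i0 |: rows Z)) (pointed nu (some_set J :\ Some i0)) != None.
  by rewrite T0 !tadd_neqNone r0 w0 wsI nu0.
have := HP _ _ cI' cJ; apply/min_twiceP => /(_ (Some i0)); apply; split=> //.
  have i0Z := notin_of_col imI c0 j0Z.
  by rewrite in_setD; apply/andP; split; last rewrite mem_some_set.
move=> [i|]; last by rewrite in_setD !None_some_set andbF.
rewrite in_setD => /andP[_]; rewrite mem_some_set (inj_eq Some_inj) => iJ ii0.
apply/negP => hle; move: (tle_neqNone hle T0fin); rewrite tadd_neqNone => /andP[hi _].
have [_ _ _ /wsum_mem/(_ (setU11 _ _))] := induced_neqNone hi.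
case/f2_neqNone=> _ [j [[<-] ci]].
have [jZ|jZ] := boolP (j \in Z); first by rewrite (induced_U1_None imI cZ ci jZ) eqxx in hi.
have := hs i isT ii0; rewrite (circ_tmatvec _ iJ ci) (circ_tmatvec _ i0J c0).
rewrite -(wt_col ci) -(wt_col c0); apply/negP/negPn.
move: hle; rewrite (term _ _ ci jZ) T0 => hle.
exact: tle_cancel_exchange r0 w0 wsI nu0 xj0 hle (Zopt j jZ).
Qed.

Lemma arrow_relations_maps_trop : arrow_relations <-> maps_trop.
Proof.
split; last exact: arrow_relations_of_maps_trop.
by move=> HA; apply/maps_trop_of_incidence/incidence_of_arrow_relations.
Qed.

Lemma arrow_relations_affine_morphism : arrow_relations <-> affine_morphism rt rs nu mu f.
Proof.
split=> [HA|/quotient_incidence/maps_trop_of_incidence/arrow_relations_of_maps_trop //].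
exact: incidence_quotient (induced_rank_le HA) (incidence_of_arrow_relations HA).
Qed.

End MonomialArrow.

Theorem theoremB (R : realType) (K : fieldType) (val : K -> trop R)
  (Hval : is_valuation val) (n : nat) (Hn : (1 <= n)%N)
  (V Ar : finType) (s t : Ar -> V) (A : Ar -> 'M[K]_n)
  (HA : forall a, weakly_monomial (A a))
  (d : V -> nat) (Hd : forall v, (d v <= n)%N)
  (mu : V -> {set 'I_n} -> trop R)
  (Hmu : forall v, valuated_matroid (d v) (mu v)) :
  (QDr val s t A d mu <->
     (forall a (x : 'I_n -> trop R), in_trop (d (s a)) (mu (s a)) x ->
        in_trop (d (t a)) (mu (t a)) (tmatvec val (A a) x))) /\
  (QDr val s t A d mu <->
     (forall a, affine_morphism (d (t a)) (d (s a)) (mu (t a)) (mu (s a))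
                                (wm_map val (A a)))).
Proof.
have QDrE : QDr val s t A d mu <->
    forall a, arrow_relations val (A a) (d (s a)) (d (t a)) (mu (s a)) (mu (t a)).
  split=> [[_ _ //]|HQ]; split=> // v; last exact: vm_incidence.
  by case: (Hmu v) => -[B [cB hB]] _ _; exists B.
split; rewrite QDrE; split=> h a.
- exact: (arrow_relations_maps_trop Hval (HA a) _ _ (Hmu (s a))).1 (h a).
- exact: (arrow_relations_maps_trop Hval (HA a) _ _ (Hmu (s a))).2 (h a).
- exact: (arrow_relations_affine_morphism Hval (HA a) (Hmu (s a)) (Hmu (t a))).1 (h a).
- exact: (arrow_relations_affine_morphism Hval (HA a) (Hmu (s a)) (Hmu (t a))).2 (h a).
Qed.
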